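(* Let $\Omega\subset\mathbb{C}$ be a domain, $p>0$, and let $\overline D_n\subset\Omega$, $n=1,2,\dots,\mathcal N$ ($\mathcal N$ finite or infinite), be closed discs of radius $R>0$, where if $\mathcal N=\infty$ there exists $N$ such that the $\overline D_n$ are pairwise disjoint for $n>N$. Then $$\mathcal A(\Omega)\cap\mathcal A_p\Big(\Omega\setminus\bigcup_{n=1}^{\mathcal N}\overline D_n\Big)\subset\mathcal A_p(\Omega).$$
   Context: For a domain (open set) $\Omega'\subset\mathbb{C}$, $\mathcal A(\Omega')$ is the algebra of holomorphic functions on $\Omega'$, and for $p>0$, $\mathcal A_p(\Omega')=\{f\in\mathcal A(\Omega'):\exists\,c,M>0\text{ with }|f(\lambda)|\le Me^{c|\lambda|^p}\text{ for all }\lambda\in\Omega'\}$. The statement means: if $f$ is holomorphic on $\Omega$ and satisfies such a bound on $\Omega\setminus\bigcup\overline D_n$, then it satisfies such a bound (with possibly different constants) on all of $\Omega$. *)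

From Stdlib Require Import Reals.
From Coquelicot Require Import Coquelicot.
Open Scope R_scope.

(* |x|^p for x >= 0, with the convention 0^p = 0 (p > 0); Stdlib's Rpower
   would give Rpower 0 p = 1. *)
Definition rpow (x p : R) : R :=
  if Req_EM_T x 0 then 0 else Rpower x p.

Definition holo_on (U : C -> Prop) (f : C -> C) : Prop :=
  forall z : C, U z -> @ex_derive C_AbsRing C_NormedModule f z.

Definition growth_p (p : R) (U : C -> Prop) (f : C -> C) : Prop :=
  exists c M : R, 0 < c /\ 0 < M /\
    forall z : C, U z -> Cmod (f z) <= M * exp (c * rpow (Cmod z) p).

Definition A_p (p : R) (U : C -> Prop) (f : C -> C) : Prop :=
  holo_on U f /\ growth_p p U f.

(* index set of the discs (0-based): Some N = finitely many (n < N),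
   None = infinitely many (all n : nat) *)
Definition in_idx (NN : option nat) (n : nat) : Prop :=
  match NN with Some N => (n < N)%nat | None => True end.

Definition cdisc (a : C) (R : R) (z : C) : Prop := Cmod (Cminus z a) <= R.

(* Fix z in one of the discs and let K be the union of the discs whose centres have modulus
   at most |z| + L0 + 3R, where L0 bounds the first N centres. K is compact, and since the
   remaining discs are pairwise disjoint and far from K, every point w near K but outside K
   lies outside all discs, so |f(w)| <= M exp(c |w|^p) with |w| <= |z| + L0 + 4R + 1.
   The maximum modulus principle carries this bound over to K, and
   (x + k)^p <= (2k)^p + 2^p x^p puts it in the required form.
   The maximum modulus principle is proved from scratch: Goursat's bisection argument on
   polar rectangles gives the mean value property of Re f on circles, hence a strict
   sub-mean value property of |f| + eps |w|^2; at a maximum point of this function on K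
   some nearby point outside K is larger still, which is impossible for small eps. *)

From Stdlib Require Import Reals.
From Coquelicot Require Import Coquelicot.
From Stdlib Require Import Lra Lia Classical ClassicalEpsilon FunctionalExtensionality List RList.
Import ListNotations.
Open Scope R_scope.

(** * Bisection of rectangles *)

Lemma nested_intervals (lo hi : nat -> R) :
  (forall n, lo n <= lo (S n)) -> (forall n, hi (S n) <= hi n) -> (forall n, lo n <= hi n) ->
  exists x, forall n, lo n <= x <= hi n.
Proof.
  intros Hlo Hhi Hle.
  assert (Hmono : forall n m, (n <= m)%nat -> lo n <= lo m /\ hi m <= hi n).
  { intros n m Hnm; induction Hnm; [lra|].
    specialize (Hlo m); specialize (Hhi m); lra. }
  assert (Hcross : forall n m, lo n <= hi m).
  { intros n m; destruct (Nat.le_ge_cases n m) as [Hnm | Hmn].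
    - pose proof (Hmono n m Hnm); pose proof (Hle m); lra.
    - pose proof (Hmono m n Hmn); pose proof (Hle n); lra. }
  set (E := fun x => exists n, x = lo n).
  destruct (completeness E) as [x [Hub Hleast]].
  - exists (hi 0%nat); intros y [n ->]; apply Hcross.
  - exists (lo 0%nat), 0%nat; reflexivity.
  - exists x; intros n; split.
    + apply Hub; exists n; reflexivity.
    + apply Hleast; intros y [m ->]; apply Hcross.
Qed.

Lemma geometric_halving_small (s del : R) :
  0 < del -> exists n, s / 2 ^ n < del.
Proof.
  intros Hdel; pose proof (Rabs_pos s).
  destruct (pow_lt_1_zero (/ 2)) with (y := del / (Rabs s + 1)) as [n Hn].
  { rewrite Rabs_right; lra. }
  { apply Rdiv_lt_0_compat; lra. }
  exists n; specialize (Hn n (le_n n)).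
  rewrite Rabs_right, pow_inv in Hn by (apply Rle_ge, pow_le; lra).
  assert (H2n : 0 < / 2 ^ n) by (apply Rinv_0_lt_compat, pow_lt; lra).
  apply Rmult_lt_compat_l with (r := Rabs s + 1) in Hn; [|lra].
  replace ((Rabs s + 1) * (del / (Rabs s + 1))) with del in Hn by (field; lra).
  unfold Rdiv; pose proof (Rle_abs s); nra.
Qed.

Record rect := Rect { rlo : R; rhi : R; tlo : R; thi : R }.

Definition rect_size (b : rect) : R := (rhi b - rlo b) + (thi b - tlo b).

Definition half_subrect (b q : rect) : Prop :=
  rlo b <= rlo q /\ rhi q <= rhi b /\ tlo b <= tlo q /\ thi q <= thi b /\
  rhi q - rlo q = (rhi b - rlo b) / 2 /\ thi q - tlo q = (thi b - tlo b) / 2.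

Section Rect_chains.

Variable sq : nat -> rect.
Hypothesis sq_half : forall n, half_subrect (sq n) (sq (S n)).
Hypothesis sq_nonempty : forall n, rlo (sq n) <= rhi (sq n) /\ tlo (sq n) <= thi (sq n).

Lemma rect_chain_common_point :
  exists rs ts, forall n, rlo (sq n) <= rs <= rhi (sq n) /\ tlo (sq n) <= ts <= thi (sq n).
Proof.
  destruct (nested_intervals (fun n => rlo (sq n)) (fun n => rhi (sq n))) as [rs Hrs];
    try (intros n; destruct (sq_half n) as (? & ? & _); destruct (sq_nonempty n); lra).
  destruct (nested_intervals (fun n => tlo (sq n)) (fun n => thi (sq n))) as [ts Hts];
    try (intros n; destruct (sq_half n) as (_ & _ & ? & ? & _); destruct (sq_nonempty n); lra).
  exists rs, ts; auto.
Qed.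

Lemma rect_chain_size (n : nat) : rect_size (sq n) = rect_size (sq 0%nat) / 2 ^ n.
Proof.
  induction n as [|n IH]; [simpl; field|].
  destruct (sq_half n) as (_ & _ & _ & _ & Hwr & Hwt).
  transitivity (rect_size (sq n) / 2); [unfold rect_size; rewrite Hwr, Hwt; field|].
  rewrite IH; simpl pow; field; apply pow_nonzero; lra.
Qed.

End Rect_chains.

Section Bisection.

Variables (Phi : R -> R -> R -> R -> R) (r0 r1 t0 t1 : R).

Definition rect_in (b : rect) : Prop :=
  r0 <= rlo b <= rhi b /\ rhi b <= r1 /\ t0 <= tlo b <= thi b /\ thi b <= t1.

Hypothesis Phi_split_r : forall ra rm rb ta tb,
  r0 <= ra <= rm -> rm <= rb <= r1 -> t0 <= ta <= tb -> tb <= t1 ->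
  Phi ra rb ta tb = Phi ra rm ta tb + Phi rm rb ta tb.
Hypothesis Phi_split_t : forall ra rb ta tm tb,
  r0 <= ra <= rb -> rb <= r1 -> t0 <= ta <= tm -> tm <= tb <= t1 ->
  Phi ra rb ta tb = Phi ra rb ta tm + Phi ra rb tm tb.
Hypothesis Phi_local : forall rs ts, r0 <= rs <= r1 -> t0 <= ts <= t1 ->
  forall eps, 0 < eps -> exists del, 0 < del /\ forall b, rect_in b ->
    rlo b <= rs <= rhi b -> tlo b <= ts <= thi b -> rect_size b < del ->
    Rabs (Phi (rlo b) (rhi b) (tlo b) (thi b)) <= eps * rect_size b ^ 2.

Let heavy (kappa : R) (b : rect) : Prop :=
  kappa * rect_size b ^ 2 < Rabs (Phi (rlo b) (rhi b) (tlo b) (thi b)).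

Lemma heavy_quarter (kappa : R) (b : rect) : rect_in b -> heavy kappa b ->
  exists q, rect_in q /\ heavy kappa q /\ half_subrect b q.
Proof.
  intros Hb Hheavy; apply NNPP; intros Hnone.
  assert (Hlight : forall q, rect_in q -> half_subrect b q ->
            Rabs (Phi (rlo q) (rhi q) (tlo q) (thi q)) <= kappa * (rect_size b / 2) ^ 2).
  { intros q Hq Hhalf.
    replace (rect_size b / 2) with (rect_size q)
      by (destruct Hhalf as (_ & _ & _ & _ & Hwr & Hwt); unfold rect_size; lra).
    apply Rnot_lt_le; intros Hheavy_q; apply Hnone; exists q; auto. }
  set (rm := (rlo b + rhi b) / 2); set (tm := (tlo b + thi b) / 2).
  assert (Hrm : rm = (rlo b + rhi b) / 2) by reflexivity.
  assert (Htm : tm = (tlo b + thi b) / 2) by reflexivity.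
  pose proof (Hlight (Rect (rlo b) rm (tlo b) tm)) as H1.
  pose proof (Hlight (Rect (rlo b) rm tm (thi b))) as H2.
  pose proof (Hlight (Rect rm (rhi b) (tlo b) tm)) as H3.
  pose proof (Hlight (Rect rm (rhi b) tm (thi b))) as H4.
  unfold rect_in, half_subrect in *; simpl in H1, H2, H3, H4.
  specialize (H1 ltac:(repeat split; lra) ltac:(repeat split; lra)).
  specialize (H2 ltac:(repeat split; lra) ltac:(repeat split; lra)).
  specialize (H3 ltac:(repeat split; lra) ltac:(repeat split; lra)).
  specialize (H4 ltac:(repeat split; lra) ltac:(repeat split; lra)).
  unfold heavy in Hheavy.
  rewrite (Phi_split_r _ rm), (Phi_split_t _ _ _ tm), (Phi_split_t rm _ _ tm) in Hheavy by lra.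
  pose proof (Rabs_triang (Phi (rlo b) rm (tlo b) tm + Phi (rlo b) rm tm (thi b))
                          (Phi rm (rhi b) (tlo b) tm + Phi rm (rhi b) tm (thi b))).
  pose proof (Rabs_triang (Phi (rlo b) rm (tlo b) tm) (Phi (rlo b) rm tm (thi b))).
  pose proof (Rabs_triang (Phi rm (rhi b) (tlo b) tm) (Phi rm (rhi b) tm (thi b))).
  lra.
Qed.

Lemma heavy_chain (kappa : R) (b0 : rect) : rect_in b0 -> heavy kappa b0 ->
  exists sq : nat -> rect, sq 0%nat = b0 /\
    forall n, rect_in (sq n) /\ heavy kappa (sq n) /\ half_subrect (sq n) (sq (S n)).
Proof.
  intros Hb0in Hb0.
  destruct (choice (fun b q => rect_in b -> heavy kappa b ->
                      rect_in q /\ heavy kappa q /\ half_subrect b q)) as [next Hnext].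
  { intros b; destruct (classic (rect_in b /\ heavy kappa b)) as [[Hb Hh] | Hno].
    - destruct (heavy_quarter kappa b Hb Hh) as [q Hq]; exists q; auto.
    - exists b; intros Hb Hh; exfalso; auto. }
  exists (fun n => Nat.iter n next b0); split; [reflexivity|].
  intros n; induction n as [|n [Hin [Hh _]]].
  - destruct (Hnext b0 Hb0in Hb0) as (? & ? & ?); auto.
  - destruct (Hnext _ Hin Hh) as (Hin' & Hh' & _).
    destruct (Hnext _ Hin' Hh') as (? & ? & ?); auto.
Qed.

(* Abstract Goursat argument: if Phi were nonzero, repeated quartering would give nested
   rectangles on which |Phi| stays above a fixed multiple of size^2, contradicting the
   local estimate at their common point. *)
Theorem additive_locally_small_eq_0 : r0 <= r1 -> t0 <= t1 -> Phi r0 r1 t0 t1 = 0.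
Proof.
  intros Hr Ht; set (b0 := Rect r0 r1 t0 t1).
  assert (Hb0in : rect_in b0) by (unfold rect_in; simpl; lra).
  apply NNPP; intros Hnz.
  set (kappa := Rabs (Phi r0 r1 t0 t1) / (2 * (rect_size b0 ^ 2 + 1))).
  assert (Habs : 0 < Rabs (Phi r0 r1 t0 t1)) by (apply Rabs_pos_lt, Hnz).
  assert (Hkappa : 0 < kappa)
    by (apply Rdiv_lt_0_compat; pose proof (pow2_ge_0 (rect_size b0)); lra).
  assert (Hb0 : heavy kappa b0).
  { unfold heavy, kappa; set (s2 := rect_size b0 ^ 2); simpl.
    assert (0 <= s2) by apply pow2_ge_0.
    apply Rmult_lt_reg_r with (2 * (s2 + 1)); [lra|].
    field_simplify; [nra | lra]. }
  destruct (heavy_chain kappa b0 Hb0in Hb0) as [sq [Hsq0 Hsq]].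
  destruct (rect_chain_common_point sq) as [rs [ts Hpt]];
    [apply Hsq | intros n; destruct (Hsq n) as ((? & ? & ? & ?) & _); lra |].
  destruct (Hpt 0%nat) as [Hrs0 Hts0]; rewrite Hsq0 in Hrs0, Hts0; simpl in Hrs0, Hts0.
  destruct (Phi_local rs ts ltac:(lra) ltac:(lra) (kappa / 2)) as [del [Hdel Hloc]]; [lra|].
  destruct (geometric_halving_small (rect_size b0) del Hdel) as [n Hn].
  destruct (Hsq n) as (Hin & Hh & _); destruct (Hpt n) as [Hrsn Htsn].
  rewrite <- Hsq0, <- (rect_chain_size sq) in Hn by apply Hsq.
  specialize (Hloc (sq n) Hin Hrsn Htsn Hn).
  unfold heavy in Hh; pose proof (pow2_ge_0 (rect_size (sq n))); nra.
Qed.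

End Bisection.

Lemma Cmod_minus_sym (x y : C) : Cmod (x - y) = Cmod (y - x).
Proof. replace (x - y)%C with (- (y - x))%C by ring. apply Cmod_opp. Qed.

Lemma Cmod_minus_triangle (x y z : C) : Cmod (x - z) <= Cmod (x - y) + Cmod (y - z).
Proof. replace (x - z)%C with ((x - y) + (y - z))%C by ring. apply Cmod_triangle. Qed.

Lemma Cmod_le_Cmod_plus_minus (w w0 : C) : Cmod w <= Cmod w0 + Cmod (w - w0).
Proof. replace w with (w0 + (w - w0))%C at 1 by ring. apply Cmod_triangle. Qed.

Lemma Rabs_Cmod_minus (x y : C) : Rabs (Cmod x - Cmod y) <= Cmod (x - y).
Proof.
  apply Rabs_le.
  pose proof (Cmod_le_Cmod_plus_minus x y); pose proof (Cmod_le_Cmod_plus_minus y x).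
  rewrite (Cmod_minus_sym y x) in *; lra.
Qed.

Lemma Re_minus (x y : C) : Re (x - y) = Re x - Re y.
Proof. reflexivity. Qed.

Lemma Im_minus (x y : C) : Im (x - y) = Im x - Im y.
Proof. reflexivity. Qed.

Lemma Rabs_Re_minus_le (x y : C) : Rabs (Re x - Re y) <= Cmod (x - y).
Proof. apply (re_le_Cmod (x - y)). Qed.

Lemma Rabs_Im_le_Cmod (z : C) : Rabs (Im z) <= Cmod z.
Proof. eapply Rle_trans; [apply Rmax_r | apply Rmax_Cmod]. Qed.

Lemma Rabs_Im_minus_le (x y : C) : Rabs (Im x - Im y) <= Cmod (x - y).
Proof. apply (Rabs_Im_le_Cmod (x - y)). Qed.

Lemma Cmod_le_Rabs_plus (x y : R) : Cmod (x, y) <= Rabs x + Rabs y.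
Proof.
  pose proof (Rabs_pos x); pose proof (Rabs_pos y).
  rewrite <- (sqrt_square (Rabs x + Rabs y)) by lra.
  apply sqrt_le_1_alt; simpl.
  pose proof (Rsqr_abs x); pose proof (Rsqr_abs y); unfold Rsqr in *; nra.
Qed.

Lemma open_small_closed_disc (Omega : C -> Prop) (x : C) (r0 : R) :
  @open C_UniformSpace Omega -> Omega x -> 0 < r0 ->
  exists r, 0 < r < r0 /\ r <= 1 /\ forall y, Cmod (y - x) <= r -> Omega y.
Proof.
  intros Ho Hx Hr0; destruct (Ho x Hx) as [e He]; pose proof (cond_pos e).
  assert (0 < Rmin r0 e) by (apply Rmin_pos; lra).
  pose proof (Rmin_l r0 e); pose proof (Rmin_r r0 e).
  pose proof (Rmin_l (Rmin r0 e / 2) 1); pose proof (Rmin_r (Rmin r0 e / 2) 1).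
  exists (Rmin (Rmin r0 e / 2) 1); split; [split; [apply Rmin_pos|]; lra|]; split; [lra|].
  intros y Hy; apply He, (C_NormedModule_mixin_compat1 x y e).
  change (Cmod (y - x) < e); lra.
Qed.

Definition C_differentiable_at (g : C -> C) (z : C) : Prop :=
  exists l : C, forall eps, 0 < eps -> exists del, 0 < del /\
    forall z', Cmod (z' - z) < del -> Cmod (g z' - g z - l * (z' - z)) <= eps * Cmod (z' - z).

Definition C_continuous_at (g : C -> C) (z : C) : Prop :=
  forall eps, 0 < eps -> exists del, 0 < del /\
    forall z', Cmod (z' - z) < del -> Cmod (g z' - g z) < eps.

Definition R_continuous_at (h : C -> R) (z : C) : Prop :=
  forall eps, 0 < eps -> exists del, 0 < del /\
    forall z', Cmod (z' - z) < del -> Rabs (h z' - h z) < eps.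

Lemma ex_derive_C_differentiable_at (g : C -> C) (z : C) :
  @ex_derive C_AbsRing C_NormedModule g z -> C_differentiable_at g z.
Proof.
  intros [l [_ Hl]]; exists l; intros eps Heps.
  assert (Hz : is_filter_lim (@locally (AbsRing_UniformSpace C_AbsRing) z) z) by easy.
  destruct (Hl z Hz (mkposreal eps Heps)) as [del Hdel].
  exists del; split; [apply cond_pos|]; intros z' Hz'.
  replace (l * (z' - z))%C with ((z' - z) * l)%C by ring.
  exact (Hdel z' Hz').
Qed.

Lemma C_differentiable_continuous_at (g : C -> C) (z : C) :
  C_differentiable_at g z -> C_continuous_at g z.
Proof.
  intros [l Hl] eps Heps.
  destruct (Hl 1 Rlt_0_1) as [del [Hdel Hg]].
  pose proof (Cmod_ge_0 l).
  exists (Rmin del (eps / (Cmod l + 2))); split.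
  { apply Rmin_pos; [lra | apply Rdiv_lt_0_compat; lra]. }
  intros z' Hz'; apply Rmin_Rgt_l in Hz' as [Hz'1 Hz'2].
  specialize (Hg z' Hz'1).
  replace (g z' - g z)%C with ((g z' - g z - l * (z' - z)) + l * (z' - z))%C by ring.
  eapply Rle_lt_trans; [apply Cmod_triangle|]; rewrite Cmod_mult.
  apply Rmult_lt_compat_r with (r := Cmod l + 2) in Hz'2; [|lra].
  unfold Rdiv in Hz'2; rewrite Rmult_assoc, Rinv_l in Hz'2 by lra.
  pose proof (Cmod_ge_0 (z' - z)); nra.
Qed.

Lemma C_differentiable_at_scal (lam : C) (g : C -> C) (z : C) :
  C_differentiable_at g z -> C_differentiable_at (fun w => lam * g w)%C z.
Proof.
  intros [l Hl]; exists (lam * l)%C; intros eps Heps.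
  pose proof (Cmod_ge_0 lam).
  destruct (Hl (eps / (Cmod lam + 1))) as [del [Hdel Hg]].
  { apply Rdiv_lt_0_compat; lra. }
  exists del; split; [exact Hdel|]; intros z' Hz'.
  replace (lam * g z' - lam * g z - lam * l * (z' - z))%C
    with (lam * (g z' - g z - l * (z' - z)))%C by ring.
  rewrite Cmod_mult; specialize (Hg z' Hz').
  assert (Hlam : Cmod lam * (eps / (Cmod lam + 1)) <= eps).
  { apply Rmult_le_reg_r with (Cmod lam + 1); [lra|]; field_simplify; nra. }
  pose proof (Cmod_ge_0 (z' - z)).
  apply Rle_trans with (Cmod lam * (eps / (Cmod lam + 1) * Cmod (z' - z))); [|nra].
  apply Rmult_le_compat_l; assumption.
Qed.

Lemma C_differentiable_at_scal_sq (k : C) (z : C) :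
  C_differentiable_at (fun w => k * (w * w))%C z.
Proof.
  exists (2 * k * z)%C; intros eps Heps.
  pose proof (Cmod_ge_0 k).
  exists (eps / (Cmod k + 1)); split; [apply Rdiv_lt_0_compat; lra|]; intros z' Hz'.
  replace (k * (z' * z') - k * (z * z) - 2 * k * z * (z' - z))%C
    with (k * (z' - z) * (z' - z))%C by ring.
  rewrite !Cmod_mult; pose proof (Cmod_ge_0 (z' - z)).
  apply Rmult_le_compat_r; [lra|].
  apply Rmult_lt_compat_l with (r := Cmod k + 1) in Hz'; [|lra].
  replace ((Cmod k + 1) * (eps / (Cmod k + 1))) with eps in Hz' by (field; lra).
  nra.
Qed.

Lemma R_continuous_at_Cmod_plus (g1 g2 : C -> C) (z : C) :
  C_continuous_at g1 z -> C_continuous_at g2 z ->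
  R_continuous_at (fun w => Cmod (g1 w) + Cmod (g2 w)) z.
Proof.
  intros H1 H2 eps Heps.
  destruct (H1 (eps / 2)) as [d1 [Hd1 Hg1]]; [lra|].
  destruct (H2 (eps / 2)) as [d2 [Hd2 Hg2]]; [lra|].
  exists (Rmin d1 d2); split; [apply Rmin_pos; assumption|].
  intros z' Hz'; apply Rmin_Rgt_l in Hz' as [Hz'1 Hz'2].
  specialize (Hg1 z' Hz'1); specialize (Hg2 z' Hz'2).
  pose proof (Rabs_Cmod_minus (g1 z') (g1 z)); pose proof (Rabs_Cmod_minus (g2 z') (g2 z)).
  replace (Cmod (g1 z') + Cmod (g2 z') - (Cmod (g1 z) + Cmod (g2 z)))
    with ((Cmod (g1 z') - Cmod (g1 z)) + (Cmod (g2 z') - Cmod (g2 z))) by ring.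
  eapply Rle_lt_trans; [apply Rabs_triang|]; lra.
Qed.

Lemma R_continuous_at_Cmod_plus_sq (g : C -> C) (eps : R) (z : C) : 0 <= eps ->
  C_continuous_at g z -> R_continuous_at (fun w => Cmod (g w) + eps * Cmod w ^ 2) z.
Proof.
  intros Heps Hg.
  replace (fun w => Cmod (g w) + eps * Cmod w ^ 2)
    with (fun w => Cmod (g w) + Cmod (RtoC eps * (w * w))).
  2: { apply functional_extensionality; intros v.
       rewrite !Cmod_mult, Cmod_R, Rabs_right by lra; ring. }
  apply R_continuous_at_Cmod_plus;
    [exact Hg | apply C_differentiable_continuous_at, C_differentiable_at_scal_sq].
Qed.

(** * Goursat's theorem on polar rectangles and the mean value property *)

Lemma Rabs_sin_minus_le (a b : R) : Rabs (sin a - sin b) <= Rabs (a - b).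
Proof.
  destruct (MVT_abs sin cos b a) as [c [-> _]]; [intros; apply derivable_pt_lim_sin|].
  pose proof (COS_bound c); pose proof (Rabs_pos (a - b)).
  assert (Rabs (cos c) <= 1) by (apply Rabs_le; lra); nra.
Qed.

Lemma Rabs_cos_minus_le (a b : R) : Rabs (cos a - cos b) <= Rabs (a - b).
Proof.
  destruct (MVT_abs cos (fun x => - sin x) b a) as [c [-> _]];
    [intros; apply derivable_pt_lim_cos|].
  pose proof (SIN_bound c); pose proof (Rabs_pos (a - b)).
  assert (Rabs (- sin c) <= 1) by (rewrite Rabs_Ropp; apply Rabs_le; lra); nra.
Qed.

Lemma continuity_pt_eps_delta (h : R -> R) (x : R) :
  (forall eps, 0 < eps -> exists del, 0 < del /\
     forall y, Rabs (y - x) < del -> Rabs (h y - h x) < eps) ->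
  continuity_pt h x.
Proof.
  intros H eps Heps; destruct (H eps Heps) as [del [Hdel Hh]].
  exists del; split; [exact Hdel|]; intros y [_ Hy]; exact (Hh y Hy).
Qed.

Definition polar (w0 : C) (r t : R) : C := (fst w0 + r * cos t, snd w0 + r * sin t).

Lemma Cmod_polar_minus_center (w0 : C) (r t : R) :
  0 <= r -> Cmod (polar w0 r t - w0) = r.
Proof.
  intros Hr; unfold Cmod, polar; simpl.
  transitivity (sqrt (r * r)); [f_equal | apply sqrt_square, Hr].
  transitivity (r * r * (Rsqr (sin t) + Rsqr (cos t))); [unfold Rsqr; ring|].
  rewrite sin2_cos2; ring.
Qed.

Lemma Cmod_polar_minus (w0 : C) (r t r' t' : R) :
  Cmod (polar w0 r t - polar w0 r' t') <= 2 * (Rabs (r - r') + Rabs r' * Rabs (t - t')).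
Proof.
  replace (polar w0 r t - polar w0 r' t')%C
    with (((r - r') * cos t + r' * (cos t - cos t'))%R,
          ((r - r') * sin t + r' * (sin t - sin t'))%R)
    by (unfold polar; apply injective_projections; simpl; ring).
  eapply Rle_trans; [apply Cmod_le_Rabs_plus|].
  pose proof (Rabs_cos_minus_le t t'); pose proof (Rabs_sin_minus_le t t').
  assert (Rabs (cos t) <= 1) by (apply Rabs_le; pose proof (COS_bound t); lra).
  assert (Rabs (sin t) <= 1) by (apply Rabs_le; pose proof (SIN_bound t); lra).
  pose proof (Rabs_pos (r - r')); pose proof (Rabs_pos r').
  pose proof (Rabs_triang ((r - r') * cos t) (r' * (cos t - cos t'))).
  pose proof (Rabs_triang ((r - r') * sin t) (r' * (sin t - sin t'))).
  rewrite !Rabs_mult in *; nra.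
Qed.

Lemma polar_2PI (w0 : C) (r : R) : polar w0 r (2 * PI) = polar w0 r 0.
Proof. unfold polar; rewrite cos_2PI, sin_2PI, cos_0, sin_0; reflexivity. Qed.

Section Polar_integrals.

Variables (g : C -> C) (w0 : C) (rho : R).
Hypothesis g_cont : forall z, Cmod (z - w0) <= rho -> C_continuous_at g z.

Lemma polar_comp_continuous (r t : R) : 0 <= r <= rho ->
  forall eps, 0 < eps -> exists del, 0 < del /\ forall r' t',
    Rabs (r' - r) < del -> Rabs (t' - t) < del ->
    Cmod (g (polar w0 r' t') - g (polar w0 r t)) < eps.
Proof.
  intros Hr eps Heps.
  assert (Hz : Cmod (polar w0 r t - w0) <= rho)
    by (rewrite Cmod_polar_minus_center; lra).
  destruct (g_cont _ Hz eps Heps) as [del [Hdel Hg]].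
  exists (del / (2 * (1 + r))); split; [apply Rdiv_lt_0_compat; lra|].
  intros r' t' Hr' Ht'; apply Hg.
  eapply Rle_lt_trans; [apply Cmod_polar_minus|].
  rewrite (Rabs_right r) by lra.
  apply Rmult_lt_compat_l with (r := 2 * (1 + r)) in Hr'; [|lra].
  apply Rmult_lt_compat_l with (r := 2 * (1 + r)) in Ht'; [|lra].
  replace (2 * (1 + r) * (del / (2 * (1 + r)))) with del in * by (field; lra).
  pose proof (Rabs_pos (r' - r)); pose proof (Rabs_pos (t' - t)); nra.
Qed.

Lemma continuity_pt_arc (r t : R) : 0 <= r <= rho ->
  continuity_pt (fun t => Re (g (polar w0 r t))) t.
Proof.
  intros Hr; apply continuity_pt_eps_delta; intros eps Heps.
  destruct (polar_comp_continuous r t Hr eps Heps) as [del [Hdel Hg]].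
  exists del; split; [exact Hdel|]; intros t' Ht'.
  eapply Rle_lt_trans; [apply Rabs_Re_minus_le|].
  apply Hg; [rewrite Rminus_diag, Rabs_R0|]; assumption.
Qed.

Lemma continuity_pt_ray (r t : R) : 0 < r <= rho ->
  continuity_pt (fun r => Im (g (polar w0 r t)) / r) r.
Proof.
  intros Hr; apply continuity_pt_div; [|apply continuity_pt_id|lra].
  apply continuity_pt_eps_delta; intros eps Heps.
  destruct (polar_comp_continuous r t ltac:(lra) eps Heps) as [del [Hdel Hg]].
  exists del; split; [exact Hdel|]; intros r' Hr'.
  eapply Rle_lt_trans; [apply Rabs_Im_minus_le|].
  apply Hg; [|rewrite Rminus_diag, Rabs_R0]; assumption.
Qed.

Lemma ex_RInt_arc (r ta tb : R) : 0 <= r <= rho ->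
  ex_RInt (fun t => Re (g (polar w0 r t))) ta tb.
Proof.
  intros Hr; apply (@ex_RInt_continuous R_CompleteNormedModule); intros t _.
  apply continuity_pt_filterlim, continuity_pt_arc, Hr.
Qed.

Lemma ex_RInt_ray (t ra rb : R) : 0 < ra <= rb -> rb <= rho ->
  ex_RInt (fun r => Im (g (polar w0 r t)) / r) ra rb.
Proof.
  intros Hra Hrb; apply (@ex_RInt_continuous R_CompleteNormedModule); intros r Hr.
  rewrite Rmin_left, Rmax_right in Hr by lra.
  apply continuity_pt_filterlim, continuity_pt_ray; lra.
Qed.

Definition arc_integral (r ta tb : R) : R := RInt (fun t => Re (g (polar w0 r t))) ta tb.

Definition ray_integral (t ra rb : R) : R := RInt (fun r => Im (g (polar w0 r t)) / r) ra rb.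

(* Along z = w0 + r e^(it) one has dz / (z - w0) = dr / r + i dt, so this is the
   imaginary part of the integral of g(z) dz / (z - w0) over the boundary of the
   polar rectangle [ra, rb] x [ta, tb]. *)
Definition polar_defect (ra rb ta tb : R) : R :=
  (arc_integral rb ta tb - arc_integral ra ta tb)
  - (ray_integral tb ra rb - ray_integral ta ra rb).

Lemma polar_defect_split_r (ra rm rb ta tb : R) :
  0 < ra <= rm -> rm <= rb <= rho ->
  polar_defect ra rb ta tb = polar_defect ra rm ta tb + polar_defect rm rb ta tb.
Proof.
  intros Hra Hrb; unfold polar_defect, ray_integral.
  rewrite <- !(RInt_Chasles _ ra rm rb) by (apply ex_RInt_ray; lra).
  unfold plus; simpl; ring.
Qed.

Lemma polar_defect_split_t (ra rb ta tm tb : R) :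
  0 <= ra <= rb -> rb <= rho ->
  polar_defect ra rb ta tb = polar_defect ra rb ta tm + polar_defect ra rb tm tb.
Proof.
  intros Hra Hrb; unfold polar_defect, arc_integral.
  rewrite <- !(RInt_Chasles _ ta tm tb) by (apply ex_RInt_arc; lra).
  unfold plus; simpl; ring.
Qed.

Lemma affine_polar_Re (A l : C) (r t : R) :
  Re (A + l * (polar w0 r t - w0)) = Re A + r * (Re l * cos t - Im l * sin t).
Proof. destruct A, l; unfold polar; simpl; ring. Qed.

Lemma affine_polar_Im (A l : C) (r t : R) :
  Im (A + l * (polar w0 r t - w0)) = Im A + r * (Re l * sin t + Im l * cos t).
Proof. destruct A, l; unfold polar; simpl; ring. Qed.

(* polar_defect vanishes for affine g = A + l (z - w0), so it is controlled by the distance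
   from g to such a function. *)
Section Affine_approximation.

Variables (A l : C) (eta ra rb ta tb : R).
Hypotheses (Hra : 0 < ra <= rb) (Hrb : rb <= rho) (Ht : ta <= tb).
Hypothesis g_near_affine : forall r t, ra <= r <= rb -> ta <= t <= tb ->
  Cmod (g (polar w0 r t) - (A + l * (polar w0 r t - w0))) <= eta.

Let trig (t : R) : R := Re l * sin t + Im l * cos t.

Lemma arc_difference_bound :
  Rabs (arc_integral rb ta tb - arc_integral ra ta tb - (rb - ra) * (trig tb - trig ta))
  <= (tb - ta) * (2 * eta).
Proof.
  assert (I : is_RInt (fun t => minus (minus (Re (g (polar w0 rb t))) (Re (g (polar w0 ra t))))
                                      ((rb - ra) * (Re l * cos t - Im l * sin t))) ta tb
                (minus (minus (arc_integral rb ta tb) (arc_integral ra ta tb))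
                       (minus ((rb - ra) * trig tb) ((rb - ra) * trig ta)))).
  { apply (@is_RInt_minus R_NormedModule); [apply (@is_RInt_minus R_NormedModule)|].
    1, 2: apply (@RInt_correct R_CompleteNormedModule), ex_RInt_arc; lra.
    apply (@is_RInt_derive R_CompleteNormedModule (fun t => (rb - ra) * trig t)); intros t _.
    - unfold trig; auto_derive; [easy | ring].
    - apply (@ex_derive_continuous R_AbsRing R_NormedModule); auto_derive; easy. }
  replace ((rb - ra) * (trig tb - trig ta))
    with ((rb - ra) * trig tb - (rb - ra) * trig ta) by ring.
  refine (@norm_RInt_le_const R_NormedModule _ ta tb _ _ Ht _ I).
  intros t Ht'; change (Rabs (Re (g (polar w0 rb t)) - Re (g (polar w0 ra t))
                              - (rb - ra) * (Re l * cos t - Im l * sin t)) <= 2 * eta).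
  set (e := fun r => (g (polar w0 r t) - (A + l * (polar w0 r t - w0)))%C).
  replace (Re (g (polar w0 rb t)) - Re (g (polar w0 ra t))
           - (rb - ra) * (Re l * cos t - Im l * sin t))
    with (Re (e rb) - Re (e ra))
    by (unfold e; rewrite !Re_minus, !affine_polar_Re; ring).
  eapply Rle_trans; [apply Rabs_triang|]; rewrite Rabs_Ropp.
  pose proof (re_le_Cmod (e rb)); pose proof (re_le_Cmod (e ra)).
  pose proof (g_near_affine rb t ltac:(lra) Ht'); pose proof (g_near_affine ra t ltac:(lra) Ht').
  unfold e in *; lra.
Qed.

Lemma ray_difference_bound :
  Rabs (ray_integral tb ra rb - ray_integral ta ra rb - (rb - ra) * (trig tb - trig ta))
  <= (rb - ra) * (2 * eta / ra).
Proof.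
  assert (I : is_RInt (fun r => minus (minus (Im (g (polar w0 r tb)) / r)
                                             (Im (g (polar w0 r ta)) / r))
                                      (trig tb - trig ta)) ra rb
                (minus (minus (ray_integral tb ra rb) (ray_integral ta ra rb))
                       (scal (rb - ra) (trig tb - trig ta)))).
  { apply (@is_RInt_minus R_NormedModule);
      [apply (@is_RInt_minus R_NormedModule) | apply (@is_RInt_const R_NormedModule)].
    all: apply (@RInt_correct R_CompleteNormedModule), ex_RInt_ray; lra. }
  refine (@norm_RInt_le_const R_NormedModule _ ra rb _ _ ltac:(lra) _ I).
  intros r Hr; change (Rabs (Im (g (polar w0 r tb)) / r - Im (g (polar w0 r ta)) / r
                              - (trig tb - trig ta)) <= 2 * eta / ra).
  set (e := fun t => (g (polar w0 r t) - (A + l * (polar w0 r t - w0)))%C).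
  replace (Im (g (polar w0 r tb)) / r - Im (g (polar w0 r ta)) / r - (trig tb - trig ta))
    with ((Im (e tb) - Im (e ta)) / r)
    by (unfold e, trig; rewrite !Im_minus, !affine_polar_Im; field; lra).
  assert (He : Rabs (Im (e tb) - Im (e ta)) <= 2 * eta).
  { eapply Rle_trans; [apply Rabs_triang|]; rewrite Rabs_Ropp.
    pose proof (Rabs_Im_le_Cmod (e tb)); pose proof (Rabs_Im_le_Cmod (e ta)).
    pose proof (g_near_affine r tb Hr ltac:(lra)); pose proof (g_near_affine r ta Hr ltac:(lra)).
    unfold e in *; lra. }
  unfold Rdiv; rewrite Rabs_mult, (Rabs_right (/ r))
    by (apply Rle_ge, Rlt_le, Rinv_0_lt_compat; lra).
  assert (/ r <= / ra) by (apply Rinv_le_contravar; lra).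
  assert (0 < / r) by (apply Rinv_0_lt_compat; lra).
  pose proof (Rabs_pos (Im (e tb) - Im (e ta))); nra.
Qed.

Lemma polar_defect_affine_bound :
  Rabs (polar_defect ra rb ta tb) <= 2 * eta * ((tb - ta) + (rb - ra) / ra).
Proof.
  pose proof arc_difference_bound; pose proof ray_difference_bound.
  set (k := (rb - ra) * (trig tb - trig ta)) in *.
  replace (polar_defect ra rb ta tb)
    with ((arc_integral rb ta tb - arc_integral ra ta tb - k)
          - (ray_integral tb ra rb - ray_integral ta ra rb - k))
    by (unfold polar_defect; ring).
  eapply Rle_trans; [apply Rabs_triang|]; rewrite Rabs_Ropp.
  replace (2 * eta * ((tb - ta) + (rb - ra) / ra))
    with ((tb - ta) * (2 * eta) + (rb - ra) * (2 * eta / ra)) by (field; lra).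
  lra.
Qed.

End Affine_approximation.

End Polar_integrals.

Section Holomorphic_polar.

Variables (g : C -> C) (w0 : C) (rho : R).
Hypothesis g_diff : forall z, Cmod (z - w0) <= rho -> C_differentiable_at g z.

Let g_cont (z : C) (Hz : Cmod (z - w0) <= rho) : C_continuous_at g z :=
  C_differentiable_continuous_at g z (g_diff z Hz).

Lemma polar_rect_near_affine (rs ts eps : R) : 0 <= rs <= rho -> 0 < eps ->
  exists (A l : C) (del : R), 0 < del /\ forall ra rb ta tb r t,
    ra <= rs <= rb -> ta <= ts <= tb -> (rb - ra) + (tb - ta) < del ->
    ra <= r <= rb -> ta <= t <= tb ->
    Cmod (g (polar w0 r t) - (A + l * (polar w0 r t - w0))) <= eps * ((rb - ra) + (tb - ta)).
Proof.
  intros Hrs Heps.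
  set (zs := polar w0 rs ts).
  assert (Hzs : Cmod (zs - w0) <= rho) by (unfold zs; rewrite Cmod_polar_minus_center; lra).
  destruct (g_diff zs Hzs) as [l Hl].
  destruct (Hl (eps / (2 * (1 + rs)))) as [d [Hd Hlin]]; [apply Rdiv_lt_0_compat; lra|].
  exists (g zs - l * (zs - w0))%C, l, (d / (2 * (1 + rs))).
  split; [apply Rdiv_lt_0_compat; lra|].
  intros ra rb ta tb r t Hr Ht Hsmall Hr' Ht'.
  set (s := (rb - ra) + (tb - ta)) in *.
  assert (Hdist : Cmod (polar w0 r t - zs) <= 2 * (1 + rs) * s).
  { unfold zs; eapply Rle_trans; [apply Cmod_polar_minus|].
    rewrite (Rabs_right rs) by lra.
    assert (Rabs (r - rs) <= s) by (apply Rabs_le; unfold s; lra).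
    assert (Rabs (t - ts) <= s) by (apply Rabs_le; unfold s; lra).
    pose proof (Rabs_pos (t - ts)); nra. }
  assert (Hd' : 2 * (1 + rs) * s < d).
  { apply Rmult_lt_compat_l with (r := 2 * (1 + rs)) in Hsmall; [|lra].
    replace (2 * (1 + rs) * (d / (2 * (1 + rs)))) with d in Hsmall by (field; lra); lra. }
  replace (g (polar w0 r t) - ((g zs - l * (zs - w0)) + l * (polar w0 r t - w0)))%C
    with (g (polar w0 r t) - g zs - l * (polar w0 r t - zs))%C by ring.
  eapply Rle_trans; [apply Hlin; lra|].
  replace (eps * s) with (eps / (2 * (1 + rs)) * (2 * (1 + rs) * s)) by (field; lra).
  apply Rmult_le_compat_l; [apply Rlt_le, Rdiv_lt_0_compat; lra | exact Hdist].
Qed.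

Lemma polar_defect_local (r1 rs ts eps : R) : 0 < r1 <= rs -> rs <= rho -> 0 < eps ->
  exists del, 0 < del /\ forall ra rb ta tb, r1 <= ra <= rs -> rs <= rb <= rho ->
    ta <= ts <= tb -> (rb - ra) + (tb - ta) < del ->
    Rabs (polar_defect g w0 ra rb ta tb) <= eps * ((rb - ra) + (tb - ta)) ^ 2.
Proof.
  intros Hr1 Hrs Heps.
  assert (Hinv : 0 < / r1) by (apply Rinv_0_lt_compat; lra).
  set (eps' := eps / (2 * (1 + / r1))).
  assert (Heps' : 0 < eps') by (apply Rdiv_lt_0_compat; lra).
  destruct (polar_rect_near_affine rs ts eps') as (A & l & del & Hdel & Happrox);
    [lra | exact Heps'|].
  exists del; split; [exact Hdel|]; intros ra rb ta tb Hra Hrb Ht Hsmall.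
  set (s := (rb - ra) + (tb - ta)) in *.
  eapply Rle_trans;
    [apply (polar_defect_affine_bound g w0 rho g_cont A l (eps' * s)); [lra | lra | lra |]|].
  { intros r t Hr Ht'; apply Happrox; unfold s in *; lra. }
  assert (Hs : (tb - ta) + (rb - ra) / ra <= s * (1 + / r1)).
  { assert ((rb - ra) / ra <= (rb - ra) * / r1).
    { unfold Rdiv; apply Rmult_le_compat_l; [lra|]; apply Rinv_le_contravar; lra. }
    assert ((rb - ra) * / r1 <= s * / r1) by (apply Rmult_le_compat_r; unfold s; lra).
    assert (tb - ta <= s) by (unfold s; lra).
    rewrite Rmult_plus_distr_l, Rmult_1_r; lra. }
  assert (0 <= eps' * s) by (apply Rmult_le_pos; unfold s; lra).
  apply Rle_trans with (2 * (eps' * s) * (s * (1 + / r1))); [apply Rmult_le_compat_l; lra|].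
  right; unfold eps'; field; lra.
Qed.

Theorem polar_defect_zero (ra rb ta tb : R) : 0 < ra <= rb -> rb <= rho -> ta <= tb ->
  polar_defect g w0 ra rb ta tb = 0.
Proof.
  intros Hr Hrb Ht.
  apply (additive_locally_small_eq_0 (polar_defect g w0) ra rb ta tb); try lra.
  - intros; apply (polar_defect_split_r g w0 rho g_cont); lra.
  - intros; apply (polar_defect_split_t g w0 rho g_cont); lra.
  - intros rs ts Hrs Hts eps Heps.
    destruct (polar_defect_local ra rs ts eps) as [del [Hdel Hloc]]; try lra.
    exists del; split; [exact Hdel|]; intros b Hb Hbr Hbt Hsize.
    unfold rect_in in Hb; apply Hloc; [lra | lra | lra | exact Hsize].
Qed.

Lemma arc_integral_circle_independent (r : R) : 0 < r <= rho ->
  arc_integral g w0 r 0 (2 * PI) = arc_integral g w0 rho 0 (2 * PI).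
Proof.
  intros Hr; pose proof PI_RGT_0.
  pose proof (polar_defect_zero r rho 0 (2 * PI) Hr (Rle_refl _) ltac:(lra)) as H0.
  assert (Hperiodic : ray_integral g w0 (2 * PI) r rho = ray_integral g w0 0 r rho).
  { unfold ray_integral; apply RInt_ext; intros; rewrite polar_2PI; reflexivity. }
  unfold polar_defect in H0; lra.
Qed.

Theorem mean_value_Re : 0 < rho -> arc_integral g w0 rho 0 (2 * PI) = 2 * PI * Re (g w0).
Proof.
  intros Hrho; pose proof PI_RGT_0.
  assert (Hw0 : Cmod (w0 - w0) <= rho)
    by (replace (w0 - w0)%C with (RtoC 0) by ring; rewrite Cmod_0; lra).
  assert (Hsmall : forall eps, 0 < eps ->
            Rabs (arc_integral g w0 rho 0 (2 * PI) - 2 * PI * Re (g w0)) <= 0 + eps).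
  { intros eps Heps.
    destruct (g_cont w0 Hw0 (eps / (2 * PI))) as [d [Hd Hg]]; [apply Rdiv_lt_0_compat; lra|].
    set (r := Rmin rho (d / 2)).
    assert (Hr : 0 < r <= rho) by (unfold r; split; [apply Rmin_pos | apply Rmin_l]; lra).
    assert (Hrd : r < d) by (unfold r; pose proof (Rmin_r rho (d / 2)); lra).
    rewrite <- (arc_integral_circle_independent r Hr).
    assert (I : is_RInt (fun t => minus (Re (g (polar w0 r t))) (Re (g w0))) 0 (2 * PI)
                  (minus (arc_integral g w0 r 0 (2 * PI)) (scal (2 * PI - 0) (Re (g w0))))).
    { apply (@is_RInt_minus R_NormedModule); [|apply (@is_RInt_const R_NormedModule)].
      apply (@RInt_correct R_CompleteNormedModule), (ex_RInt_arc g w0 rho g_cont); lra. }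
    replace (0 + eps) with ((2 * PI - 0) * (eps / (2 * PI))) by (field; lra).
    replace (2 * PI * Re (g w0)) with ((2 * PI - 0) * Re (g w0)) by ring.
    refine (@norm_RInt_le_const R_NormedModule _ 0 (2 * PI) _ _ ltac:(lra) _ I).
    intros t _; change (Rabs (Re (g (polar w0 r t)) - Re (g w0)) <= eps / (2 * PI)).
    eapply Rle_trans; [apply Rabs_Re_minus_le|]; left; apply Hg.
    rewrite Cmod_polar_minus_center; lra. }
  apply Rminus_diag_uniq, Rabs_eq_0, Rle_antisym;
    [apply Rle_plus_epsilon, Hsmall | apply Rabs_pos].
Qed.

End Holomorphic_polar.

(** * The maximum modulus principle *)

Lemma exists_unit_rotation (z : C) : exists lam : C, Cmod lam <= 1 /\ Re (lam * z) = Cmod z.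
Proof.
  destruct (Req_dec (Cmod z) 0) as [Hz | Hz].
  - exists (RtoC 1); rewrite Cmod_1, (Cmod_eq_0 z Hz), Cmod_0; split; [lra | simpl; ring].
  - destruct z as [x y]; set (m := Cmod (x, y)) in *.
    assert (Hm2 : m ^ 2 = x ^ 2 + y ^ 2) by apply Cmod2_alt.
    pose proof (Cmod_ge_0 (x, y)).
    exists (x / m, - y / m); split.
    + assert (Hlam : Cmod (x / m, - y / m) ^ 2 = 1).
      { rewrite Cmod2_alt; cbn [Re Im fst snd].
        replace ((x / m) ^ 2 + (- y / m) ^ 2) with ((x ^ 2 + y ^ 2) / m ^ 2) by (field; lra).
        rewrite <- Hm2; field; lra. }
      pose proof (Cmod_ge_0 (x / m, - y / m)); nra.
    + cbn [Re Im fst snd Cmult].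
      replace (x / m * x - - y / m * y) with ((x ^ 2 + y ^ 2) / m) by (field; lra).
      rewrite <- Hm2; field; lra.
Qed.

Lemma is_RInt_Cmod_polar_sq (w0 : C) (rho : R) :
  is_RInt (fun t => Cmod (polar w0 rho t) ^ 2) 0 (2 * PI) (2 * PI * (Cmod w0 ^ 2 + rho ^ 2)).
Proof.
  destruct w0 as [x0 y0]; set (c := x0 ^ 2 + y0 ^ 2 + rho ^ 2).
  apply (@is_RInt_ext R_NormedModule) with (f := fun t => c + 2 * rho * (x0 * cos t + y0 * sin t)).
  { intros t _; rewrite Cmod2_alt; unfold polar, c; simpl.
    pose proof (sin2_cos2 t) as Hsc; unfold Rsqr in Hsc; nra. }
  replace (2 * PI * (Cmod (x0, y0) ^ 2 + rho ^ 2))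
    with (minus (c * (2 * PI) + 2 * rho * (x0 * sin (2 * PI) - y0 * cos (2 * PI)))
                (c * 0 + 2 * rho * (x0 * sin 0 - y0 * cos 0))).
  2: { rewrite sin_2PI, cos_2PI, sin_0, cos_0, Cmod2_alt; unfold c, minus, plus, opp; simpl; ring. }
  apply (@is_RInt_derive R_CompleteNormedModule
           (fun t => c * t + 2 * rho * (x0 * sin t - y0 * cos t))); intros t _.
  - auto_derive; [easy | ring].
  - apply (@ex_derive_continuous R_AbsRing R_NormedModule); auto_derive; easy.
Qed.

(* Strict because |z|^2 is strictly subharmonic; multiplying f by a unit factor lam with
   lam f(w0) = |f(w0)| reduces the claim to the mean value property of Re (lam f). *)
Lemma exists_circle_point_gt (f : C -> C) (w0 : C) (rho eps : R) : 0 < rho -> 0 < eps ->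
  (forall z, Cmod (z - w0) <= rho -> C_differentiable_at f z) ->
  exists t, Cmod (f w0) + eps * Cmod w0 ^ 2
            < Cmod (f (polar w0 rho t)) + eps * Cmod (polar w0 rho t) ^ 2.
Proof.
  intros Hrho Heps Hf; pose proof PI_RGT_0.
  destruct (exists_unit_rotation (f w0)) as [lam [Hlam Hrot]].
  set (g := fun z => (lam * f z)%C).
  assert (Hg : forall z, Cmod (z - w0) <= rho -> C_differentiable_at g z)
    by (intros; apply C_differentiable_at_scal; auto).
  pose proof (mean_value_Re g w0 rho Hg Hrho) as Hmean; unfold g at 2 in Hmean.
  rewrite Hrot in Hmean.
  apply NNPP; intros Hnone.
  assert (Hle : forall t, 0 < t < 2 * PI ->
            plus (Re (g (polar w0 rho t))) (scal eps (Cmod (polar w0 rho t) ^ 2))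
            <= Cmod (f w0) + eps * Cmod w0 ^ 2).
  { intros t _; change (Re (g (polar w0 rho t)) + eps * Cmod (polar w0 rho t) ^ 2
                        <= Cmod (f w0) + eps * Cmod w0 ^ 2).
    assert (Re (g (polar w0 rho t)) <= Cmod (f (polar w0 rho t))).
    { unfold g; eapply Rle_trans; [apply Rle_abs|]; eapply Rle_trans; [apply re_le_Cmod|].
      rewrite Cmod_mult; pose proof (Cmod_ge_0 (f (polar w0 rho t))); nra. }
    apply Rnot_lt_le; intros Hgt; apply Hnone; exists t; lra. }
  assert (I : is_RInt (fun t => plus (Re (g (polar w0 rho t)))
                                     (scal eps (Cmod (polar w0 rho t) ^ 2))) 0 (2 * PI)
                (plus (arc_integral g w0 rho 0 (2 * PI))
                      (scal eps (2 * PI * (Cmod w0 ^ 2 + rho ^ 2))))).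
  { apply (@is_RInt_plus R_NormedModule);
      [|apply (@is_RInt_scal R_NormedModule), is_RInt_Cmod_polar_sq].
    apply (@RInt_correct R_CompleteNormedModule),
      (ex_RInt_arc g w0 rho (fun z Hz => C_differentiable_continuous_at g z (Hg z Hz))); lra. }
  pose proof (is_RInt_le _ _ 0 (2 * PI) _ _ ltac:(lra) I
                (@is_RInt_const R_NormedModule 0 (2 * PI) (Cmod (f w0) + eps * Cmod w0 ^ 2)) Hle)
    as Hint.
  change (arc_integral g w0 rho 0 (2 * PI) + eps * (2 * PI * (Cmod w0 ^ 2 + rho ^ 2))
          <= (2 * PI - 0) * (Cmod (f w0) + eps * Cmod w0 ^ 2)) in Hint.
  rewrite Hmean in Hint.
  assert (0 < eps * (2 * PI) * rho ^ 2) by (apply Rmult_lt_0_compat; nra).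
  nra.
Qed.

Definition Cclosed (K : C -> Prop) : Prop :=
  forall w, ~ K w -> exists r, 0 < r /\ forall v, Cmod (v - w) < r -> ~ K v.

Section Compact_sets.

Variables (K : C -> Prop) (L : R).
Hypotheses (K_bounded : forall w, K w -> Cmod w <= L) (K_closed : Cclosed K).

Lemma bounded_above_of_locally_bounded (h : C -> R) :
  (forall w, K w -> exists r, 0 < r /\ exists M, forall v, K v -> Cmod (v - w) < r -> h v <= M) ->
  exists M, forall w, K w -> h w <= M.
Proof.
  intros Hloc.
  set (pt := fun t : Compactness.Tn 2 R => (fst t, fst (snd t)) : C).
  destruct (choice (fun (t : Compactness.Tn 2 R) (dM : posreal * R) =>
                      forall v, Cmod (v - pt t) < 2 * fst dM -> K v -> h v <= snd dM))
    as [F HF].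
  { intros t; destruct (classic (K (pt t))) as [Ht | Ht].
    - destruct (Hloc _ Ht) as [r [Hr [M HM]]].
      exists (mkposreal (r / 2) ltac:(lra), M); intros v Hv Kv; apply HM; [exact Kv|].
      cbn [fst snd pos] in Hv; lra.
    - destruct (K_closed _ Ht) as [r [Hr Hfar]].
      exists (mkposreal (r / 2) ltac:(lra), 0); intros v Hv Kv.
      exfalso; apply (Hfar v); [cbn [fst snd pos] in Hv; lra | exact Kv]. }
  apply NNPP; intros Hnone.
  apply (Compactness.compactness_list 2 (- L, (- L, tt)) (L, (L, tt)) (fun t => fst (F t))).
  intros [l Hl]; apply Hnone.
  exists (MaxRlist (map (fun t => snd (F t)) l)); intros w Kw.
  destruct w as [x y].
  pose proof (Rmax_Cmod (x, y)) as Hxy; pose proof (K_bounded _ Kw).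
  pose proof (Rmax_l (Rabs x) (Rabs y)); pose proof (Rmax_r (Rabs x) (Rabs y)); simpl in Hxy.
  destruct (Hl (x, (y, tt))) as [t [Hin [_ Hclose]]].
  { assert (Rabs x <= L /\ Rabs y <= L) as [Hx Hy] by lra.
    apply Rabs_le_between in Hx; apply Rabs_le_between in Hy; simpl; tauto. }
  apply Rle_trans with (snd (F t)); [|apply MaxRlist_P1, in_map_iff; exists t; auto].
  apply (HF t); [|exact Kw].
  set (d := pos (fst (F t))) in *.
  destruct t as [a [b []]]; destruct Hclose as [Ha [Hb _]].
  eapply Rle_lt_trans; [apply Cmod_le_Rabs_plus|]; simpl.
  unfold Rminus in Ha, Hb; lra.
Qed.
Lemma max_attained_of_continuous (h : C -> R) (z0 : C) :
  (forall w, K w -> R_continuous_at h w) -> K z0 ->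
  exists w0, K w0 /\ forall w, K w -> h w <= h w0.
Proof.
  intros Hcont Kz0.
  destruct (bounded_above_of_locally_bounded h) as [M HM].
  { intros w Kw; destruct (Hcont w Kw 1 Rlt_0_1) as [r [Hr Hh]].
    exists r; split; [exact Hr|]; exists (h w + 1); intros v _ Hv.
    specialize (Hh v Hv); apply Rabs_def2 in Hh; lra. }
  destruct (completeness (fun x => exists w, K w /\ x = h w)) as [S [HS HSleast]].
  { exists M; intros x [w [Kw ->]]; auto. }
  { exists (h z0), z0; auto. }
  assert (Hle : forall w, K w -> h w <= S) by (intros w Kw; apply HS; exists w; auto).
  apply NNPP; intros Hno.
  assert (Hlt : forall w, K w -> h w < S).
  { intros w Kw; destruct (Rle_lt_or_eq_dec _ _ (Hle w Kw)) as [|Heq]; [assumption|].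
    exfalso; apply Hno; exists w; split; [exact Kw|]; intros v Kv; rewrite Heq; auto. }
  (* If the supremum S is not attained, 1 / (S - h) is continuous on K, hence bounded. *)
  destruct (bounded_above_of_locally_bounded (fun w => / (S - h w))) as [N HN].
  { intros w Kw; pose proof (Hlt w Kw).
    destruct (Hcont w Kw ((S - h w) / 2)) as [r [Hr Hh]]; [lra|].
    exists r; split; [exact Hr|]; exists (2 / (S - h w)); intros v Kv Hv.
    specialize (Hh v Hv); apply Rabs_def2 in Hh; pose proof (Hlt v Kv).
    replace (2 / (S - h w)) with (/ ((S - h w) / 2)) by (field; lra).
    apply Rinv_le_contravar; lra. }
  pose proof (HN z0 Kz0); pose proof (Hlt z0 Kz0).
  assert (0 < / (S - h z0)) by (apply Rinv_0_lt_compat; lra).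
  assert (HN0 : 0 < / N) by (apply Rinv_0_lt_compat; lra).
  enough (S <= S - / N) by lra.
  apply HSleast; intros x [w [Kw ->]].
  pose proof (HN w Kw); pose proof (Hlt w Kw).
  assert (/ N <= S - h w); [|lra].
  rewrite <- (Rinv_inv (S - h w)); apply Rinv_le_contravar; [apply Rinv_0_lt_compat|]; lra.
Qed.

End Compact_sets.

Theorem max_modulus_compact (Omega : C -> Prop) (f : C -> C) (K : C -> Prop) (L B : R) :
  @open C_UniformSpace Omega -> holo_on Omega f -> (forall w, K w -> Omega w) ->
  (forall w, K w -> Cmod w <= L) -> Cclosed K ->
  (forall w0, K w0 -> exists r, 0 < r /\
     forall w, Cmod (w - w0) <= r -> ~ K w -> Cmod (f w) <= B) ->
  forall z, K z -> Cmod (f z) <= B.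
Proof.
  intros Ho Hf HKO Hbd Hcl Hnear_boundary z Kz.
  apply Rnot_lt_le; intros Hgt.
  assert (HL : 0 <= L) by (pose proof (Hbd z Kz); pose proof (Cmod_ge_0 z); lra).
  pose proof (pow2_ge_0 (L + 1)).
  set (eps := (Cmod (f z) - B) / (2 * ((L + 1) ^ 2 + 1))).
  assert (Heps : 0 < eps) by (apply Rdiv_lt_0_compat; lra).
  set (phi := fun w => Cmod (f w) + eps * Cmod w ^ 2).
  assert (Hphi : forall w, K w -> R_continuous_at phi w).
  { intros w Kw; apply R_continuous_at_Cmod_plus_sq; [lra|].
    apply C_differentiable_continuous_at, ex_derive_C_differentiable_at, Hf, HKO, Kw. }
  destruct (max_attained_of_continuous K L Hbd Hcl phi z Hphi Kz) as [w0 [Kw0 Hmax]].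
  destruct (Hnear_boundary w0 Kw0) as [r0 [Hr0 Hnear]].
  destruct (open_small_closed_disc Omega w0 r0 Ho (HKO w0 Kw0) Hr0)
    as [rho [Hrho [Hrho1 HOmega]]].
  destruct (exists_circle_point_gt f w0 rho eps) as [t Ht]; [lra | exact Heps | |].
  { intros w Hw; apply ex_derive_C_differentiable_at, Hf, HOmega, Hw. }
  set (w := polar w0 rho t) in *.
  assert (Hw : Cmod (w - w0) = rho) by (apply Cmod_polar_minus_center; lra).
  pose proof (Hmax z Kz) as Hz; unfold phi in Hz.
  destruct (classic (K w)) as [Kw | Kw].
  - pose proof (Hmax w Kw); unfold phi in *; lra.
  - pose proof (Hnear w ltac:(lra) Kw).
    assert (Hwsq : eps * Cmod w ^ 2 <= eps * (L + 1) ^ 2).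
    { pose proof (Cmod_le_Cmod_plus_minus w w0); pose proof (Hbd w0 Kw0).
      apply Rmult_le_compat_l; [lra|]; apply pow_incr; pose proof (Cmod_ge_0 w); lra. }
    assert (eps * (L + 1) ^ 2 < Cmod (f z) - B).
    { unfold eps; apply Rmult_lt_reg_r with (2 * ((L + 1) ^ 2 + 1)); [lra|].
      field_simplify; nra. }
    pose proof (pow2_ge_0 (Cmod z)); assert (0 <= eps * Cmod z ^ 2) by nra.
    lra.
Qed.

(** * Separated discs *)

Lemma separated_of_disjoint_cdisc (x y : C) (rad : R) :
  ~ (exists z, cdisc x rad z /\ cdisc y rad z) -> 2 * rad < Cmod (x - y).
Proof.
  intros Hdisj; apply Rnot_le_lt; intros Hle; apply Hdisj.
  set (mid := ((fst x + fst y) / 2, (snd x + snd y) / 2) : C).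
  exists mid; unfold cdisc.
  replace (mid - x)%C with ((y - x) * RtoC (/ 2))%C
    by (unfold mid; apply injective_projections; simpl; field).
  replace (mid - y)%C with ((x - y) * RtoC (/ 2))%C
    by (unfold mid; apply injective_projections; simpl; field).
  rewrite !Cmod_mult, Cmod_R, Rabs_right, (Cmod_minus_sym y x) by lra; lra.
Qed.

(* The squared mutual distances of three points sum to at most three times their squared
   distances to w, here to at most 9 (1.1 rad)^2 < 3 (2 rad)^2. *)
Lemma no_three_separated_in_disc (w x1 x2 x3 : C) (rad : R) : 0 < rad ->
  Cmod (x1 - w) <= 11 / 10 * rad -> Cmod (x2 - w) <= 11 / 10 * rad ->
  Cmod (x3 - w) <= 11 / 10 * rad ->
  2 * rad < Cmod (x1 - x2) -> 2 * rad < Cmod (x1 - x3) -> 2 * rad < Cmod (x2 - x3) -> False.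
Proof.
  intros HR H1 H2 H3 H12 H13 H23.
  assert (Hin : forall u, Cmod u <= 11 / 10 * rad -> Re u ^ 2 + Im u ^ 2 <= (11 / 10 * rad) ^ 2).
  { intros u Hu; rewrite <- Cmod2_alt; apply pow_incr; pose proof (Cmod_ge_0 u); lra. }
  assert (Hout : forall u, 2 * rad < Cmod u -> (2 * rad) ^ 2 < Re u ^ 2 + Im u ^ 2).
  { intros u Hu; rewrite <- Cmod2_alt; nra. }
  replace (x1 - x2)%C with ((x1 - w) - (x2 - w))%C in H12 by ring.
  replace (x1 - x3)%C with ((x1 - w) - (x3 - w))%C in H13 by ring.
  replace (x2 - x3)%C with ((x2 - w) - (x3 - w))%C in H23 by ring.
  set (u1 := (x1 - w)%C) in *; set (u2 := (x2 - w)%C) in *; set (u3 := (x3 - w)%C) in *.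
  apply Hin in H1, H2, H3; apply Hout in H12, H13, H23.
  rewrite !Re_minus, !Im_minus in H12, H13, H23.
  pose proof (pow2_ge_0 (Re u1 + Re u2 + Re u3)).
  pose proof (pow2_ge_0 (Im u1 + Im u2 + Im u3)).
  nra.
Qed.

Section Disc_family.

Variables (a : nat -> C) (rad : R) (NN : option nat) (N0 : nat).
Hypothesis rad_pos : 0 < rad.
Hypothesis tail_separated : forall m n, in_idx NN m -> in_idx NN n ->
  (N0 < m)%nat -> (N0 < n)%nat -> m <> n -> 2 * rad < Cmod (a m - a n).

Definition disc_union (P : nat -> Prop) (w : C) : Prop := exists j, P j /\ cdisc (a j) rad w.

Lemma finite_gap (P : nat -> Prop) (w : C) (l : list nat) :
  (forall j, P j -> rad < Cmod (a j - w)) ->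
  exists r, 0 < r /\ forall j, In j l -> P j -> rad + r < Cmod (a j - w).
Proof.
  intros Hfar; induction l as [|j l [r [Hr Hl]]].
  - exists 1; split; [lra | intros j []].
  - destruct (classic (P j)) as [Pj | nPj].
    + pose proof (Hfar j Pj).
      exists (Rmin r ((Cmod (a j - w) - rad) / 2)); split; [apply Rmin_pos; lra|].
      pose proof (Rmin_l r ((Cmod (a j - w) - rad) / 2)).
      pose proof (Rmin_r r ((Cmod (a j - w) - rad) / 2)).
      intros i [<- | Hi] Pi; [lra | pose proof (Hl i Hi Pi); lra].
    + exists r; split; [exact Hr|]; intros i [<- | Hi] Pi; [contradiction | auto].
Qed.

Lemma few_near_tail_centers (P : nat -> Prop) (w : C) :
  (forall j, P j -> in_idx NN j) ->
  exists l, forall j, P j -> (N0 < j)%nat -> Cmod (a j - w) <= 11 / 10 * rad -> In j l.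
Proof.
  intros HP.
  set (near := fun j => P j /\ (N0 < j)%nat /\ Cmod (a j - w) <= 11 / 10 * rad).
  destruct (classic (exists j, near j)) as [[j1 Hj1] | Hnone].
  2: { exists []; intros j ? ? ?; apply Hnone; exists j; unfold near; auto. }
  destruct (classic (exists j, near j /\ j <> j1)) as [[j2 [Hj2 Hne]] | Hone].
  2: { exists [j1]; intros j Pj Hj Hjw; destruct (Nat.eq_dec j j1) as [-> | Hne]; [now left|].
       exfalso; apply Hone; exists j; unfold near; auto. }
  exists [j1; j2]; intros j Pj Hj Hjw.
  destruct (Nat.eq_dec j j1) as [-> | Hne1]; [now left|].
  destruct (Nat.eq_dec j j2) as [-> | Hne2]; [now right; left|].
  destruct Hj1 as (P1 & B1 & C1), Hj2 as (P2 & B2 & C2); exfalso.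
  apply (no_three_separated_in_disc w (a j) (a j1) (a j2) rad rad_pos Hjw C1 C2);
    apply tail_separated; auto.
Qed.

Lemma uniform_gap (P : nat -> Prop) (w : C) :
  (forall j, P j -> in_idx NN j) -> (forall j, P j -> rad < Cmod (a j - w)) ->
  exists r, 0 < r /\ forall j, P j -> rad + r < Cmod (a j - w).
Proof.
  intros HP Hfar.
  destruct (few_near_tail_centers P w HP) as [l Hl].
  destruct (finite_gap P w (seq 0 (S N0) ++ l) Hfar) as [r [Hr Hgap]].
  exists (Rmin r (rad / 20)); split; [apply Rmin_pos; lra|].
  pose proof (Rmin_l r (rad / 20)); pose proof (Rmin_r r (rad / 20)).
  intros j Pj; destruct (Nat.le_gt_cases j N0) as [Hj | Hj].
  - assert (In j (seq 0 (S N0) ++ l)) by (apply in_or_app; left; apply in_seq; lia).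
    pose proof (Hgap j ltac:(assumption) Pj); lra.
  - destruct (Rle_lt_dec (Cmod (a j - w)) (11 / 10 * rad)) as [Hnear | Hfar']; [|lra].
    assert (In j (seq 0 (S N0) ++ l)) by (apply in_or_app; right; auto).
    pose proof (Hgap j ltac:(assumption) Pj); lra.
Qed.

Lemma disc_union_avoids_ball (P : nat -> Prop) (w : C) :
  (forall j, P j -> in_idx NN j) -> ~ disc_union P w ->
  exists r, 0 < r /\ forall v, Cmod (v - w) < r -> ~ disc_union P v.
Proof.
  intros HP Hw.
  destruct (uniform_gap P w HP) as [r [Hr Hgap]].
  { intros j Pj; rewrite Cmod_minus_sym; apply Rnot_le_lt; intros Hj; apply Hw; exists j; auto. }
  exists r; split; [exact Hr|]; intros v Hv [j [Pj Hj]]; unfold cdisc in Hj.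
  pose proof (Hgap j Pj); pose proof (Cmod_minus_triangle (a j) v w).
  rewrite (Cmod_minus_sym (a j) v) in *; lra.
Qed.

Lemma disc_union_closed (P : nat -> Prop) :
  (forall j, P j -> in_idx NN j) -> Cclosed (disc_union P).
Proof. intros HP w Hw; exact (disc_union_avoids_ball P w HP Hw). Qed.
Variable L0 : R.
Hypothesis head_bounded : forall j, (j <= N0)%nat -> Cmod (a j) <= L0.

Lemma far_center_dist (Lam : R) (m j : nat) (w0 : C) :
  L0 + 2 * rad <= Lam -> in_idx NN m -> Cmod (a m) <= Lam -> cdisc (a m) rad w0 ->
  in_idx NN j -> Lam < Cmod (a j) -> rad < Cmod (a j - w0).
Proof.
  intros HLam Hm Ham Hw0 Hj Haj; unfold cdisc in Hw0.
  destruct (Nat.le_gt_cases j N0) as [HjN | HjN]; [pose proof (head_bounded j HjN); lra|].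
  destruct (Nat.le_gt_cases m N0) as [HmN | HmN].
  - pose proof (head_bounded m HmN).
    pose proof (Cmod_le_Cmod_plus_minus w0 (a m)).
    pose proof (Cmod_le_Cmod_plus_minus (a j) w0); lra.
  - assert (Hmj : m <> j) by (intros ->; lra).
    pose proof (tail_separated m j Hm Hj HmN HjN Hmj).
    pose proof (Cmod_minus_triangle (a m) w0 (a j)).
    rewrite (Cmod_minus_sym (a m) w0), (Cmod_minus_sym w0 (a j)) in *; lra.
Qed.

Theorem radial_bound_on_discs (Omega : C -> Prop) (f : C -> C) (G : R -> R) :
  @open C_UniformSpace Omega -> holo_on Omega f ->
  (forall n, in_idx NN n -> forall z, cdisc (a n) rad z -> Omega z) ->
  (forall x y, 0 <= x <= y -> G x <= G y) ->
  (forall z, Omega z -> ~ disc_union (in_idx NN) z -> Cmod (f z) <= G (Cmod z)) ->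
  forall z, disc_union (in_idx NN) z -> Cmod (f z) <= G (Cmod z + (L0 + 4 * rad + 1)).
Proof.
  intros Ho Hf Hdiscs HG Hbound z [n [Hn Hzn]].
  pose proof (Cmod_ge_0 z); pose proof (Cmod_ge_0 (a 0%nat)).
  pose proof (head_bounded 0 (Nat.le_0_l N0)).
  set (Lam := L0 + 3 * rad + Cmod z).
  set (near := fun j => in_idx NN j /\ Cmod (a j) <= Lam).
  set (far := fun j => in_idx NN j /\ Lam < Cmod (a j)).
  apply (max_modulus_compact Omega f (disc_union near) (Lam + rad)); auto.
  - intros w [j [[Hj _] Hw]]; exact (Hdiscs j Hj w Hw).
  - intros w [j [[_ Hj] Hw]]; unfold cdisc in Hw.
    pose proof (Cmod_le_Cmod_plus_minus w (a j)); lra.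
  - apply disc_union_closed; intros j [Hj _]; exact Hj.
  - intros w0 [m [[Hm Ham] Hw0]].
    destruct (disc_union_avoids_ball far w0) as [r1 [Hr1 Hfar]].
    { intros j [Hj _]; exact Hj. }
    { intros [j [[Hj Haj] Hj0]]; unfold cdisc in Hj0; rewrite Cmod_minus_sym in Hj0.
      pose proof (far_center_dist Lam m j w0 ltac:(unfold Lam; lra) Hm Ham Hw0 Hj Haj); lra. }
    destruct (open_small_closed_disc Omega w0 r1 Ho (Hdiscs m Hm w0 Hw0) Hr1)
      as [r [Hr [Hr1' HO]]].
    exists r; split; [lra|]; intros w Hw Hnear.
    assert (Hw_off : ~ disc_union (in_idx NN) w).
    { intros [j [Hj Hwj]]; destruct (Rle_lt_dec (Cmod (a j)) Lam).
      - apply Hnear; exists j; unfold near; auto.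
      - apply (Hfar w ltac:(lra)); exists j; unfold far; auto. }
    eapply Rle_trans; [apply Hbound; [apply HO, Hw | exact Hw_off]|].
    apply HG; split; [apply Cmod_ge_0|]; unfold cdisc in Hw0.
    pose proof (Cmod_le_Cmod_plus_minus w w0); pose proof (Cmod_le_Cmod_plus_minus w0 (a m)).
    unfold Lam in *; lra.
  - exists n; split; [split; [exact Hn|] | exact Hzn].
    unfold cdisc in Hzn; rewrite Cmod_minus_sym in Hzn.
    pose proof (Cmod_le_Cmod_plus_minus (a n) z); unfold Lam; lra.
Qed.

End Disc_family.

Lemma tail_separated_of_disjoint (a : nat -> C) (rad : R) (NN : option nat) :
  (NN = None -> exists N, forall m n, (N < m)%nat -> (N < n)%nat -> m <> n ->
     ~ (exists z, cdisc (a m) rad z /\ cdisc (a n) rad z)) ->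
  exists N0, forall m n, in_idx NN m -> in_idx NN n ->
    (N0 < m)%nat -> (N0 < n)%nat -> m <> n -> 2 * rad < Cmod (a m - a n).
Proof.
  destruct NN as [N|]; intros Hdisj.
  - exists N; intros m n Hm; simpl in Hm; lia.
  - destruct (Hdisj eq_refl) as [N HN]; exists N; intros m n _ _ Hm Hn Hmn.
    apply separated_of_disjoint_cdisc, HN; assumption.
Qed.

(** * Growth bounds *)

Lemma prefix_bound (h : nat -> R) (N : nat) : exists L, forall j, (j <= N)%nat -> h j <= L.
Proof.
  exists (MaxRlist (map h (seq 0 (S N)))); intros j Hj.
  apply MaxRlist_P1, in_map, in_seq; lia.
Qed.

Lemma exp_le_compat (x y : R) : x <= y -> exp x <= exp y.
Proof.
  intros Hxy; destruct (Rle_lt_or_eq_dec _ _ Hxy) as [Hlt | ->]; [|lra].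
  left; apply exp_increasing, Hlt.
Qed.

Lemma rpow_nonneg (x p : R) : 0 <= rpow x p.
Proof. unfold rpow; destruct (Req_EM_T x 0); [lra | left; apply exp_pos]. Qed.

Lemma rpow_le_compat (x y p : R) : 0 < p -> 0 <= x <= y -> rpow x p <= rpow y p.
Proof.
  intros Hp Hxy; unfold rpow at 1; destruct (Req_EM_T x 0) as [_ | Hx]; [apply rpow_nonneg|].
  unfold rpow; destruct (Req_EM_T y 0) as [Hy | _]; [lra|].
  apply Rle_Rpower_l; lra.
Qed.

(* (x + k)^p <= (2 max(x, k))^p <= (2 k)^p + (2 x)^p *)
Lemma rpow_plus_le (x k p : R) : 0 < p -> 0 <= x -> 0 < k ->
  rpow (x + k) p <= Rpower (2 * k) p + Rpower 2 p * rpow x p.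
Proof.
  intros Hp Hx Hk; unfold rpow at 1; destruct (Req_EM_T (x + k) 0) as [Hxk | _]; [lra|].
  assert (H2k : 0 < Rpower (2 * k) p) by apply exp_pos.
  assert (H2 : 0 < Rpower 2 p) by apply exp_pos.
  pose proof (rpow_nonneg x p).
  destruct (Rle_dec x k) as [Hle | Hgt].
  - assert (Rpower (x + k) p <= Rpower (2 * k) p) by (apply Rle_Rpower_l; lra); nra.
  - unfold rpow; destruct (Req_EM_T x 0) as [Hx0 | _]; [lra|].
    rewrite Rpower_mult_distr by lra.
    assert (Rpower (x + k) p <= Rpower (2 * x) p) by (apply Rle_Rpower_l; lra); lra.
Qed.

Theorem proposition7
  (Omega : C -> Prop) (p Rad : R) (a : nat -> C) (NN : option nat)
  (f : C -> C) :
  @open C_UniformSpace Omega ->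
  0 < p -> 0 < Rad ->
  (forall n, in_idx NN n -> forall z, cdisc (a n) Rad z -> Omega z) ->
  (NN = None ->
     exists N : nat, forall m n : nat, (N < m)%nat -> (N < n)%nat -> m <> n ->
       ~ (exists z, cdisc (a m) Rad z /\ cdisc (a n) Rad z)) ->
  holo_on Omega f ->
  A_p p (fun z => Omega z /\ ~ (exists n, in_idx NN n /\ cdisc (a n) Rad z)) f ->
  A_p p Omega f.
Proof.
  intros Ho Hp HRad Hdiscs Hdisj Hf [_ [c [M [Hc [HM Hgrowth]]]]].
  destruct (tail_separated_of_disjoint a Rad NN Hdisj) as [N0 Hsep].
  destruct (prefix_bound (fun j => Cmod (a j)) N0) as [L0 HL0].
  set (k := L0 + 4 * Rad + 1).
  assert (Hk : 0 < k).
  { pose proof (HL0 0%nat (Nat.le_0_l N0)); pose proof (Cmod_ge_0 (a 0%nat)); unfold k; lra. }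
  set (G := fun x => M * exp (c * rpow x p)).
  assert (HG : forall x y, 0 <= x <= y -> G x <= G y).
  { intros x y Hxy; apply Rmult_le_compat_l, exp_le_compat, Rmult_le_compat_l; try lra.
    apply rpow_le_compat; assumption. }
  assert (Hbound : forall z, Omega z -> Cmod (f z) <= G (Cmod z + k)).
  { intros z Hz; pose proof (Cmod_ge_0 z).
    destruct (classic (disc_union a Rad (in_idx NN) z)) as [Hin | Hout].
    - apply (radial_bound_on_discs a Rad NN N0 HRad Hsep L0 HL0 Omega f G Ho Hf Hdiscs HG);
        [intros w Hw Hw'; exact (Hgrowth w (conj Hw Hw')) | exact Hin].
    - apply Rle_trans with (G (Cmod z)); [exact (Hgrowth z (conj Hz Hout)) | apply HG; lra]. }
  split; [exact Hf|].
  exists (c * Rpower 2 p), (M * exp (c * Rpower (2 * k) p)).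
  split; [apply Rmult_lt_0_compat; [exact Hc | apply exp_pos]|].
  split; [apply Rmult_lt_0_compat; [exact HM | apply exp_pos]|].
  intros z Hz; eapply Rle_trans; [apply Hbound, Hz|].
  unfold G; rewrite Rmult_assoc, <- exp_plus; apply Rmult_le_compat_l, exp_le_compat; [lra|].
  pose proof (rpow_plus_le (Cmod z) k p Hp (Cmod_ge_0 z) Hk); nra.
Qed.
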